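(* Let $d\ge 2$ and let $D\subset T_d$ be a domain with $|D|\ge 2$. Then $D$ is isoperimetrically optimal, i.e. $|\partial D|=I_d(|D|)$, if and only if $\tau(D)\le d-2$.
   Context: $T_d$ is the $d$-regular tree (connected, acyclic, every vertex of degree $d$). A domain is a finite nonempty connected set $D$ of vertices of $T_d$, identified with its induced subgraph. For $x\in D$, $\deg_D(x)$ is the number of neighbours of $x$ lying in $D$. The (inner vertex) boundary is $\partial D=\{x\in D:\deg_D(x)<d\}$. For $k\ge1$, $I_d(k)=\min\{|\partial D| : D\subset T_d \text{ a domain with } |D|=k\}$. For a domain with $|D|\ge 2$, the boundary branching excess is $\tau(D)=\sum_{x\in\partial D}(\deg_D(x)-1)$. *)

(* Model of the d-regular tree T_d:
   vertices = reduced words over the alphabet {0,...,d-1} with no two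
   consecutive equal letters (Cayley graph of the free product of d copies
   of Z/2); w and wa are adjacent. The root [::] has d neighbours, every
   other word w (last letter a) has d-1 children w b (b <> a) and 1 parent. *)
From mathcomp Require Import all_boot.
Set Implicit Arguments. Unset Strict Implicit. Unset Printing Implicit Defensive.

Definition vertex := seq nat.

Definition valid (d : nat) (w : vertex) : bool :=
  all (fun a => a < d) w && sorted (fun a b => a != b) w.

Definition parent (w : vertex) : vertex := take (size w).-1 w.

Definition adj : rel vertex := fun u v =>
  ((v != [::]) && (parent v == u)) || ((u != [::]) && (parent u == v)).

Definition connected_in (D : seq vertex) : Prop :=
  forall x y, x \in D -> y \in D ->
    exists p : seq vertex, [&& path adj x p, last x p == y & all (mem D) p].

Definition domain (d : nat) (D : seq vertex) : Prop :=
  [/\ D != [::], uniq D, all (valid d) D & connected_in D].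

Definition degD (D : seq vertex) (x : vertex) : nat := count (adj x) D.

Definition bdry (d : nat) (D : seq vertex) : seq vertex :=
  [seq x <- D | degD D x < d].

Definition Id_is (d k m : nat) : Prop :=
  (exists D, domain d D /\ size D = k /\ size (bdry d D) = m) /\
  (forall D, domain d D -> size D = k -> m <= size (bdry d D)).

Definition tau (d : nat) (D : seq vertex) : nat :=
  \sum_(x <- bdry d D) (degD D x - 1).

From mathcomp Require Import all_boot zify.
Set Implicit Arguments. Unset Strict Implicit. Unset Printing Implicit Defensive.

(* Counting adjacencies in the tree D twice gives
     tau D + |bdry D| + d (|D| - |bdry D|) = sum of degrees = 2 (|D| - 1),
   so (d - 1) |bdry D| = (d - 2) |D| + 2 + tau D: among domains of a fixed size
   the boundary size is an affine function of tau, and tau is determined modulo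
   d - 1.  A domain of each size with tau <= d - 2 exists: grow it from the root
   by always adding a child to the one boundary vertex that is not a leaf. *)

Lemma count_sum (T : Type) (a : pred T) (s : seq T) :
  count a s = \sum_(y <- s) (a y : nat).
Proof. by rewrite -sum1_count big_mkcond; apply: eq_bigr => y _; case: (a y). Qed.

Lemma sum_le_at_most_one (T : eqType) (s : seq T) (f : T -> nat) x m :
  uniq s -> {in s, forall w, w != x -> f w = 0} -> {in s, forall w, f w <= m} ->
  \sum_(w <- s) f w <= m.
Proof.
move=> Us f0 fm; apply: (@leq_trans (\sum_(w <- s) (w == x) * m)).
  rewrite [X in X <= _]big_seq [X in _ <= X]big_seq; apply: leq_sum => w ws.
  by case: eqP => [_|/eqP wx]; rewrite ?mul1n ?fm ?f0.
rewrite -big_distrl /= -count_sum count_uniq_mem //.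
by case: (x \in s); rewrite ?mul1n ?mul0n.
Qed.

Lemma seq_extremum (T : eqType) (R : rel T) (s : seq T) :
  transitive R -> total R -> s != [::] -> exists2 r, r \in s & {in s, forall w, R r w}.
Proof.
move=> trR totR; elim: s => // a s IH _.
have Raa : R a a by have := totR a a; rewrite orbb.
case: (eqVneq s [::]) => [->|/IH [r rs Rr]].
  by exists a; rewrite ?mem_head // => w; rewrite mem_seq1 => /eqP ->.
have [Rar|Rra] := orP (totR a r).
  exists a; first exact: mem_head.
  by move=> w; rewrite in_cons => /predU1P[->|/Rr]; last exact: trR.
exists r; first by rewrite in_cons rs orbT.
by move=> w; rewrite in_cons => /predU1P[->|/Rr].
Qed.

Lemma exists_min_seq (T : eqType) (f : T -> nat) (s : seq T) :
  s != [::] -> exists2 r, r \in s & {in s, forall w, f r <= f w}.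
Proof.
apply: (seq_extremum (R := fun u v => f u <= f v)).
  by move=> v u w; apply: leq_trans.
by move=> u v; apply: leq_total.
Qed.

Lemma exists_max_seq (T : eqType) (f : T -> nat) (s : seq T) :
  s != [::] -> exists2 r, r \in s & {in s, forall w, f w <= f r}.
Proof.
apply: (seq_extremum (R := fun u v => f v <= f u)).
  by move=> v u w /[swap]; apply: leq_trans.
by move=> u v; apply: leq_total.
Qed.

Lemma parent_rcons (p : vertex) a : parent (rcons p a) = p.
Proof. by rewrite /parent size_rcons /= -cats1 take_size_cat. Qed.

Lemma size_parent (v : vertex) : size (parent v) = (size v).-1.
Proof. by rewrite /parent size_take; case: v => //= a v; rewrite ltnSn. Qed.

Definition child_of (u v : vertex) : bool := (v != [::]) && (parent v == u).

Lemma adjE u v : adj u v = child_of u v || child_of v u.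
Proof. by []. Qed.

Lemma size_child_of u v : child_of u v -> size v = (size u).+1.
Proof. by case: v => // a v /andP[_ /eqP <-]; rewrite size_parent. Qed.

Lemma child_of_rcons (u : vertex) a : child_of u (rcons u a).
Proof. by rewrite /child_of parent_rcons eqxx; case: u. Qed.

Lemma adj_sym : symmetric adj.
Proof. by move=> u v; rewrite !adjE orbC. Qed.

Lemma adj_irr v : adj v v = false.
Proof. by rewrite adjE orbb; apply/negP => /size_child_of /eqP; rewrite eqn_leq ltnn andbF. Qed.

Definition descendant (v x : vertex) : bool := take (size v) x == v.

Lemma descendant_refl v : descendant v v.
Proof. by rewrite /descendant take_size. Qed.

Lemma descendant_child v x y : descendant v x -> child_of x y -> descendant v y.
Proof.
move=> /eqP vx; case/lastP: y => // p a /andP[_]; rewrite parent_rcons => /eqP ->.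
have le_vx : size v <= size x by rewrite -vx size_take; case: ifP => // /ltnW.
by rewrite /descendant -cats1 takel_cat // vx.
Qed.

Lemma descendant_parent v x : descendant v x -> x != v -> descendant v (parent x).
Proof.
move=> /eqP vx xv; rewrite /descendant /parent takeC.
case: (ltnP (size v) (size x)) => lt_vx.
  by rewrite vx take_oversize //; case: (size x) lt_vx.
by move: vx xv; rewrite take_oversize // => ->; rewrite eqxx.
Qed.

Lemma descendant_short v x : descendant v x -> size x <= size v -> x = v.
Proof. by move=> /eqP vx le_xv; rewrite take_oversize in vx. Qed.

Lemma path_exit_subtree v p x : descendant v x -> path adj x p ->
  ~~ descendant v (last x p) -> child_of (parent v) v && (parent v \in p).
Proof.
elim: p x => [|y p IH] x vx /=; first by rewrite vx.
case/andP=> xy yp vp.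
case vy: (descendant v y).
  by case/andP: (IH y vy yp vp) => -> pp; rewrite inE pp orbT.
move: xy; rewrite adjE => /orP[/(descendant_child vx)|yx]; first by rewrite vy.
have [xv|] := eqVneq x v.
  by move: yx; rewrite xv /child_of => /andP[-> /eqP ->]; rewrite !eqxx mem_head.
move=> /(descendant_parent vx); case/andP: yx => _ /eqP ->.
by rewrite vy.
Qed.

Definition has_parent_in (D : seq vertex) (v : vertex) : bool :=
  (v != [::]) && (parent v \in D).

(* The root is any vertex of minimal length. *)
Lemma domain_root d D : domain d D ->
  exists r, [/\ r \in D, ~~ has_parent_in D r & {in D, forall v, v != r -> has_parent_in D v}].
Proof.
case=> D0 _ _ connD; have [r rD rmin] := exists_min_seq size D0.
exists r; split => //.
  apply/negP => /andP[r0 /rmin]; rewrite size_parent.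
  by case: r r0 {rD rmin} => //= a r _; rewrite ltnn.
move=> v vD vr; have [p /and3P[vp /eqP pr pD]] := connD v r vD rD.
have : ~~ descendant v (last v p).
  by rewrite pr; apply: contra vr => /descendant_short <-; rewrite ?eqxx ?rmin.
case/(path_exit_subtree (descendant_refl v) vp)/andP => /andP[v0 _] pp.
by rewrite /has_parent_in v0; apply: (allP pD).
Qed.

Lemma count_has_parent_in d D : domain d D -> count (has_parent_in D) D = (size D).-1.
Proof.
move=> domD; have [r [rD rroot others]] := domain_root domD.
have [_ uD _ _] := domD.
have : count (predC (has_parent_in D)) D = 1.
  rewrite -[RHS]/(nat_of_bool true) -rD -(count_uniq_mem r uD).
  apply: eq_in_count => v vD /=; have [->|vr] := eqVneq v r; first by rewrite rroot.
  by rewrite others.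
by have := count_predC (has_parent_in D) D; lia.
Qed.

Lemma sum_count_parent D : uniq D ->
  \sum_(v <- D) count (child_of^~ v) D = count (has_parent_in D) D.
Proof.
move=> uD; rewrite count_sum; apply: eq_bigr => v _.
rewrite /has_parent_in /child_of; case: (v != [::]) => /=; last exact: count_pred0.
by rewrite -(count_uniq_mem _ uD); apply: eq_count => u /=; rewrite eq_sym.
Qed.

Lemma degD_split D x : degD D x = count (child_of x) D + count (child_of^~ x) D.
Proof.
rewrite /degD -count_predUI (@eq_count _ (predI _ _) pred0) ?count_pred0 ?addn0 //.
by move=> y /=; apply/negP => /andP[/size_child_of sy /size_child_of]; lia.
Qed.

Lemma sum_degD d D : domain d D -> \sum_(x <- D) degD D x = 2 * (size D).-1.
Proof.
move=> domD; have [_ uD _ _] := domD.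
rewrite (eq_bigr _ (fun x _ => degD_split D x)) big_split /= sum_count_parent //.
have -> : \sum_(x <- D) count (child_of x) D = \sum_(y <- D) count (child_of^~ y) D.
  under eq_bigr do rewrite count_sum.
  by rewrite exchange_big; apply: eq_bigr => y _; rewrite count_sum.
by rewrite sum_count_parent // (count_has_parent_in domD) addnn mul2n.
Qed.

Lemma valid_rcons d x a : valid d (rcons x a) =
  [&& valid d x, a < d & (x == [::]) || (last 0 x != a)].
Proof.
rewrite /valid all_rcons; case: x => [|h t] /=; first by rewrite andbT.
rewrite rcons_path; case: (a < d); case: (all _ t); case: (h < d) => //=.
by rewrite andbC.
Qed.

Definition neighbour (x : vertex) (c : nat) : vertex :=
  if (x != [::]) && (c == last 0 x) then parent x else rcons x c.

Definition neighbours d x : seq vertex := [seq neighbour x c | c <- iota 0 d].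

Lemma size_neighbours d x : size (neighbours d x) = d.
Proof. by rewrite size_map size_iota. Qed.

Lemma uniq_neighbours d x : uniq (neighbours d x).
Proof.
rewrite map_inj_in_uniq ?iota_uniq // => c1 c2 _ _; rewrite /neighbour.
case: ifP => [/andP[x0 /eqP ->]|_]; case: ifP => [/andP[_ /eqP -> //]|_] //.
- move/(congr1 size); rewrite size_parent size_rcons.
  by case: x x0 => //= a x _; lia.
- move/(congr1 size); rewrite size_parent size_rcons.
  by case: x => //= a x; lia.
- by move/(congr1 (last 0)); rewrite !last_rcons.
Qed.

Lemma adj_neighbours d x y : y \in neighbours d x -> adj x y.
Proof.
case/mapP => c _ ->; rewrite /neighbour adjE; case: ifP => [/andP[x0 _]|_].
  by rewrite /child_of x0 eqxx orbT.
by rewrite child_of_rcons.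
Qed.

Lemma mem_neighbours d x y : valid d x -> valid d y -> adj x y -> y \in neighbours d x.
Proof.
move=> Vx Vy; rewrite adjE => /orP[|/andP[x0 /eqP xy]].
  case/lastP: y Vy => // p a; rewrite valid_rcons /child_of parent_rcons.
  case/and3P=> _ ad pa /andP[_ /eqP px]; subst p; apply/mapP; exists a.
    by rewrite mem_iota.
  rewrite /neighbour; case: ifP => // /andP[x0 /eqP ax].
  by move: pa; rewrite (negbTE x0) ax eqxx.
apply/mapP; exists (last 0 x); last by rewrite /neighbour x0 eqxx xy.
rewrite mem_iota /=; case/andP: Vx => /allP -> //.
by case: x x0 {xy} => //= h t _; apply: mem_last.
Qed.

Lemma degD_le d D x : valid d x -> uniq D -> all (valid d) D -> degD D x <= d.
Proof.
move=> Vx uD VD; rewrite /degD -size_filter -(size_neighbours d x).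
apply: uniq_leq_size; first exact: filter_uniq.
move=> y; rewrite mem_filter => /andP[xy yD].
exact: mem_neighbours Vx (allP VD y yD) xy.
Qed.

Lemma degD_gt0 d D x : domain d D -> 2 <= size D -> x \in D -> 0 < degD D x.
Proof.
case=> _ uD _ connD sD xD.
have [y yD yx] : exists2 y, y \in D & y != x.
  apply/hasP; rewrite has_count (@eq_count _ _ (predC (pred1 x))) //.
  by move: sD; rewrite -(count_predC (pred1 x)) (count_uniq_mem x uD) xD; lia.
have [[|z p] /and3P[/= xp /eqP px pD]] := connD x y xD yD.
  by rewrite px eqxx in yx.
case/andP: xp pD => xz _ /andP[zD _].
by rewrite /degD -has_count; apply/hasP; exists z.
Qed.

Lemma sum_degD_bdry d D : domain d D -> 2 <= size D ->
  tau d D + size (bdry d D) + d * (size D - size (bdry d D)) = 2 * (size D).-1.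
Proof.
move=> domD sD; rewrite -(sum_degD domD); have [_ uD VD _] := domD.
rewrite (bigID (fun x => degD D x < d)) /=; congr (_ + _).
  rewrite -big_filter /tau -sum1_size -big_split /=; apply: eq_big_seq => x.
  by rewrite mem_filter => /andP[_ xD]; have := degD_gt0 domD sD xD; lia.
rewrite big_seq_cond (eq_bigr (fun _ => d)).
  rewrite -big_seq_cond big_const_seq iter_addn_0 mulnC size_filter.
  by rewrite -(count_predC (fun x => degD D x < d) D) addKn mulnC.
move=> x /andP[xD]; have := degD_le (allP VD x xD) uD VD; lia.
Qed.

Lemma bdry_size_tau d D : 2 <= d -> domain d D -> 2 <= size D ->
  d.-1 * size (bdry d D) = (d - 2) * size D + 2 + tau d D.
Proof.
move=> d2 domD sD; have := sum_degD_bdry domD sD.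
have : size (bdry d D) <= size D by rewrite size_filter count_size.
nia.
Qed.

Lemma connected_in_cons D z y : connected_in D -> z \in D -> adj z y ->
  connected_in (y :: D).
Proof.
move=> connD zD zy.
have sub p : all (mem D) p -> all (mem (y :: D)) p.
  by apply: sub_all => w /= wD; rewrite in_cons wD orbT.
move=> u w; rewrite !in_cons => /predU1P[->|uD] /predU1P[->|wD].
- by exists [::]; rewrite /= eqxx.
- have [p /and3P[zp pw pD]] := connD z w zD wD.
  by exists (z :: p); rewrite /= zp pw adj_sym zy in_cons zD orbT sub.
- have [p /and3P[up /eqP pz pD]] := connD u z uD zD.
  exists (rcons p y); rewrite rcons_path up pz zy last_rcons eqxx all_rcons /=.
  by rewrite mem_head sub.
- have [p /and3P[up pw pD]] := connD u w uD wD.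
  by exists p; rewrite up pw sub.
Qed.

Definition greedy_domain d D : Prop :=
  [/\ domain d D, {in D, forall w, w != [::] -> parent w \in D} &
      exists x, {in bdry d D, forall w, w != x -> degD D w <= 1}].

Lemma greedy_domain_root d : greedy_domain d [:: [::]].
Proof.
split => //.
- by split => // u w; rewrite !mem_seq1 => /eqP -> /eqP ->; exists [::].
- by move=> w; rewrite mem_seq1 => /eqP ->; rewrite eqxx.
- by exists [::] => w; rewrite mem_filter mem_seq1 => /andP[_ /eqP ->]; rewrite eqxx.
Qed.

Lemma greedy_domain_tau d D : greedy_domain d D -> tau d D <= d - 2.
Proof.
case=> [[_ uD _ _] _ [x leaves]].
apply: (sum_le_at_most_one (x := x)); first exact: filter_uniq.
  by move=> w wb wx; have := leaves w wb wx; lia.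
by move=> w ; rewrite mem_filter => /andP[lt_wd _]; lia.
Qed.

(* A vertex of maximal length has no child in D. *)
Lemma greedy_growth_point d D : 2 <= d -> greedy_domain d D ->
  exists z, [/\ z \in D, degD D z < d & {in bdry d D, forall w, w != z -> degD D w <= 1}].
Proof.
move=> d2 [[D0 uD _ _] _ [x leaves]].
case xb: (x \in bdry d D).
  by exists x; move: xb; rewrite mem_filter => /andP[].
have [z zD zmax] := exists_max_seq size D0.
have z_leaf : degD D z <= 1.
  rewrite /degD -size_filter; apply: (@leq_trans (size [:: parent z])) => //.
  apply: uniq_leq_size; first exact: filter_uniq.
  move=> w; rewrite mem_filter adjE => /andP[/orP[/size_child_of wz|/andP[_ /eqP ->]] wD].
    by have := zmax w wD; rewrite wz ltnn.
  by rewrite mem_seq1.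
exists z; split=> //; first by lia.
by move=> w wb _; apply: leaves => //; apply: contraTneq wb => ->; rewrite xb.
Qed.

Lemma exists_new_child d (D : seq vertex) z :
  {in D, forall w, w != [::] -> parent w \in D} -> z \in D -> valid d z -> degD D z < d ->
  exists y, [/\ y \notin D, valid d y & child_of z y].
Proof.
move=> closedD zD Vz lt_zd.
have [allD|/allPn [_ /mapP [c cd ->]]] := boolP (all (mem D) (neighbours d z)).
  suff : d <= degD D z by rewrite leqNgt lt_zd.
  rewrite /degD -size_filter -{1}(size_neighbours d z); apply: uniq_leq_size.
    exact: uniq_neighbours.
  by move=> w wz; rewrite mem_filter (adj_neighbours wz); apply: (allP allD).
rewrite /neighbour; case: ifP => [/andP[z0 _]|not_parent]; first by rewrite /= closedD.
move=> zcD; exists (rcons z c); split=> //; last exact: child_of_rcons.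
rewrite valid_rcons Vz; move: cd; rewrite mem_iota /= => -> /=.
by move: not_parent; case: (z == [::]) => //=; rewrite eq_sym => ->.
Qed.

Lemma adj_new_child (D : seq vertex) z y : {in D, forall w, w != [::] -> parent w \in D} ->
  y \notin D -> child_of z y -> {in D, forall w, adj w y = (w == z)}.
Proof.
move=> closedD yD /andP[y0 /eqP yz] w wD; rewrite adjE /child_of y0 yz /= eq_sym.
suff -> : (w != [::]) && (parent w == y) = false by rewrite orbF.
by apply/negP => /andP[w0 /eqP wy]; move: yD; rewrite -wy closedD.
Qed.

Lemma greedy_domain_grow d D : 2 <= d -> greedy_domain d D ->
  exists2 y, y \notin D & greedy_domain d (y :: D).
Proof.
move=> d2 greedyD; have [z [zD lt_zd leaves]] := greedy_growth_point d2 greedyD.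
case: greedyD => [[D0 uD VD connD] closedD _].
have [y [yD Vy zy]] := exists_new_child closedD zD (allP VD z zD) lt_zd.
have adj_y := adj_new_child closedD yD zy.
have degD_old w : w \in D -> degD (y :: D) w = (w == z) + degD D w.
  by move=> wD; rewrite /degD /= adj_y.
have degD_y : degD (y :: D) y = 1.
  rewrite /degD /= adj_irr -[RHS]/(nat_of_bool true) -zD -(count_uniq_mem z uD).
  by apply: eq_in_count => w wD /=; rewrite adj_sym adj_y.
exists y => //; split.
- split=> //=; first by rewrite yD uD.
    by rewrite Vy VD.
  by apply: connected_in_cons connD zD _; rewrite adjE zy.
- move=> w; rewrite in_cons => /predU1P[->|wD] w0.
    by case/andP: zy => _ /eqP ->; rewrite in_cons zD orbT.
  by rewrite in_cons closedD ?orbT.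
- exists z => w; rewrite mem_filter in_cons => /andP[lt_wd /predU1P[->|wD]] wz.
    by rewrite degD_y.
  move: lt_wd; rewrite degD_old // (negbTE wz) /= => lt_wd.
  by apply: leaves => //; rewrite mem_filter lt_wd wD.
Qed.

Lemma greedy_domain_of_size d n : 2 <= d ->
  exists D, greedy_domain d D /\ size D = n.+1.
Proof.
move=> d2; elim: n => [|n [D [greedyD sD]]].
  by exists [:: [::]]; split=> //; apply: greedy_domain_root.
by have [y _ greedy_yD] := greedy_domain_grow d2 greedyD; exists (y :: D); rewrite /= sD.
Qed.

Section SameSize.

Variables (d : nat) (D E : seq vertex).
Hypotheses (d2 : 2 <= d) (domD : domain d D) (domE : domain d E).
Hypotheses (sD : 2 <= size D) (sE : size E = size D).

Lemma bdry_le_of_tau : tau d D <= d - 2 -> size (bdry d D) <= size (bdry d E).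
Proof.
have := bdry_size_tau d2 domD sD; have := bdry_size_tau d2 domE.
by rewrite sE => /(_ sD); nia.
Qed.

Lemma tau_le_of_bdry : size (bdry d D) <= size (bdry d E) -> tau d D <= tau d E.
Proof.
have := bdry_size_tau d2 domD sD; have := bdry_size_tau d2 domE.
by rewrite sE => /(_ sD); nia.
Qed.

End SameSize.

Theorem mainTheorem8 (d : nat) (D : seq vertex) :
  2 <= d -> domain d D -> 2 <= size D ->
  (Id_is d (size D) (size (bdry d D)) <-> tau d D <= d - 2).
Proof.
move=> d2 domD sD; split => [[_ minD] | tauD].
- have [E [greedyE sE]] := greedy_domain_of_size (size D).-1 d2.
  have [domE _ _] := greedyE.
  have {}sE : size E = size D by rewrite sE prednK // ltnW.
  apply: leq_trans (greedy_domain_tau greedyE).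
  exact: tau_le_of_bdry d2 domD domE sD sE (minD E domE sE).
- split; first by exists D.
  by move=> E domE sE; apply: bdry_le_of_tau d2 domD domE sD sE tauD.
Qed.
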